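(* Let $\mathcal{M}$ be a gridding matrix whose cell graph $G_\mathcal{M}$ is a tree containing no bumper-ended path. Then $G_\mathcal{M}$ contains a vertex $r$ such that for every vertex $q\ne r$, the path in $G_\mathcal{M}$ from $r$ to $q$, written $r=p_1,\dots,p_m=q$, does not end in a bumper, i.e., $(p_{m-1},q)$ is not a bumper.
   Context: A $k\times\ell$ gridding matrix $\mathcal{M}$ has permutation classes as entries ($i$ columns left to right, $j$ rows bottom to top). The cell graph $G_\mathcal{M}$ has as vertices the cells with infinite entries, adjacent when they share a row or column and all cells strictly between them are finite or empty; $\mathcal{M}_p$ denotes the entry at vertex $p$. For a permutation $\pi$ of length $n$ (diagram $\{(i,\pi_i)\}$), intervalicity of $A\subseteq[n]$ is the least number of disjoint integer intervals with union $A$, and grid-complexity of a point set is the maximum of the intervalicities of its two axis projections. The horizontal path-width of $\pi$ is the maximum over $i$ of the grid-complexity of $\{(1,\pi_1),\dots,(i,\pi_i)\}$; the vertical path-width is the maximum over $i$ of the grid-complexity of the set of points with values $1,\dots,i$. An ordered pair $(p,q)$ of vertices of $G_\mathcal{M}$ is a bumper if either $\mathcal{M}_q$ has unbounded horizontal path-width (over its members) and shares a column with $p$, or $\mathcal{M}_q$ has unbounded vertical path-width and shares a row with $p$. A bumper-ended path is a path $p_1,\dots,p_k$ in $G_\mathcal{M}$ with both $(p_2,p_1)$ and $(p_{k-1},p_k)$ bumpers. *)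

From mathcomp Require Import all_boot.
Set Implicit Arguments. Unset Strict Implicit. Unset Printing Implicit Defensive.

(* A permutation of length n is the word pi_1 ... pi_n, stored as a seq nat
   with pi_(j+1) = nth 0 s j; it must be a rearrangement of 1..n. *)
Definition is_perm (s : seq nat) : Prop := perm_eq s (iota 1 (size s)).

Definition contains (s t : seq nat) : Prop :=
  exists m : bitseq, size m = size s /\
    let u := mask m s in
    size u = size t /\
    forall i j, i < size t -> j < size t ->
      (nth 0 u i < nth 0 u j) = (nth 0 t i < nth 0 t j).

Definition is_perm_class (C : seq nat -> Prop) : Prop :=
  (forall s, C s -> is_perm s) /\
  (forall s t, C s -> is_perm t -> contains s t -> C t).

Definition infinite_class (C : seq nat -> Prop) : Prop :=
  ~ exists l : seq (seq nat), forall s, C s -> s \in l.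

Definition intervalicity_le (A : nat -> Prop) (c : nat) : Prop :=
  exists ivs : seq (nat * nat),
    size ivs <= c /\
    (forall iv, iv \in ivs -> iv.1 <= iv.2) /\
    (forall i j, i < size ivs -> j < size ivs -> i <> j ->
       forall x, ~ ((nth (0,0) ivs i).1 <= x <= (nth (0,0) ivs i).2 /\
                    (nth (0,0) ivs j).1 <= x <= (nth (0,0) ivs j).2)) /\
    (forall x, A x <-> exists2 iv, iv \in ivs & iv.1 <= x <= iv.2).

Definition grid_complexity_le (P : seq (nat * nat)) (c : nat) : Prop :=
  intervalicity_le (fun x => x \in map fst P) c /\
  intervalicity_le (fun y => y \in map snd P) c.

Definition diagram (s : seq nat) : seq (nat * nat) :=
  [seq (j.+1, nth 0 s j) | j <- iota 0 (size s)].

Definition hpw_le (s : seq nat) (c : nat) : Prop :=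
  forall i, i <= size s -> grid_complexity_le (take i (diagram s)) c.

Definition vpw_le (s : seq nat) (c : nat) : Prop :=
  forall i, i <= size s ->
    grid_complexity_le [seq p <- diagram s | p.2 <= i] c.

Definition unbounded_hpw (C : seq nat -> Prop) : Prop :=
  forall c, exists2 s, C s & ~ hpw_le s c.
Definition unbounded_vpw (C : seq nat -> Prop) : Prop :=
  forall c, exists2 s, C s & ~ vpw_le s c.

(* A k x l gridding matrix: M i j is the entry in column i (left to right)
   and row j (bottom to top). *)
Definition gridding (k l : nat) := 'I_k -> 'I_l -> seq nat -> Prop.

Definition cell (k l : nat) := ('I_k * 'I_l)%type.

Definition entry k l (M : gridding k l) (p : cell k l) := M p.1 p.2.

Definition is_vertex k l (M : gridding k l) (p : cell k l) : Prop :=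
  infinite_class (entry M p).

Definition strictly_between (a x b : nat) : bool := (a < x < b) || (b < x < a).

Definition adj k l (M : gridding k l) (p q : cell k l) : Prop :=
  is_vertex M p /\ is_vertex M q /\ p <> q /\
  ( (p.1 = q.1 /\ forall c : cell k l, c.1 = p.1 ->
        strictly_between p.2 c.2 q.2 -> ~ is_vertex M c)
  \/ (p.2 = q.2 /\ forall c : cell k l, c.2 = p.2 ->
        strictly_between p.1 c.1 q.1 -> ~ is_vertex M c)).

Fixpoint chain (T : Type) (R : T -> T -> Prop) (x : T) (s : seq T) : Prop :=
  if s is y :: s' then R x y /\ chain R y s' else True.

Definition gpath k l (M : gridding k l) (x : cell k l) (s : seq (cell k l)) : Prop :=
  is_vertex M x /\ chain (adj M) x s /\ uniq (x :: s).

(* cycles of length >= 3 *)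
Definition gcycle k l (M : gridding k l) (x : cell k l) (s : seq (cell k l)) : Prop :=
  gpath M x s /\ 2 <= size s /\ adj M (last x s) x.

Definition is_tree k l (M : gridding k l) : Prop :=
  (exists p, is_vertex M p) /\
  (forall p q, is_vertex M p -> is_vertex M q ->
     exists s, gpath M p s /\ last p s = q) /\
  (forall x s, ~ gcycle M x s).

Definition bumper k l (M : gridding k l) (p q : cell k l) : Prop :=
  is_vertex M p /\ is_vertex M q /\
  ((unbounded_hpw (entry M q) /\ p.1 = q.1) \/
   (unbounded_vpw (entry M q) /\ p.2 = q.2)).

Definition penult (T : Type) (x : T) (s : seq T) : T := last x (belast x s).

Definition bumper_ended_path k l (M : gridding k l)
    (p1 p2 : cell k l) (t : seq (cell k l)) : Prop :=
  gpath M p1 (p2 :: t) /\ bumper M p2 p1 /\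
  bumper M (penult p1 (p2 :: t)) (last p1 (p2 :: t)).

From mathcomp Require Import all_boot.
From Stdlib Require Import Classical.

Set Implicit Arguments.
Unset Strict Implicit.
Unset Printing Implicit Defensive.

(* Call r a good root if no path from r ends in a bumper, and
   suppose no vertex is a good root.  Then from every vertex
   there is a path ending in a bumper.  Start at a vertex r0 with such a path
   r0 ... a b, and take a bumper-terminated path b c ... from its last vertex b.
   If c = a, then b a ... is a bumper-ended path, which is excluded; otherwise
   the concatenation r0 ... a b c ... never turns straight back on itself, and
   in a graph without cycles such a non-backtracking walk is a path.  So it is
   a strictly longer bumper-terminated path from r0; iterating, we get paths
   longer than the number of cells, which is absurd. *)

Fixpoint nonbacktracking (T : eqType) (s : seq T) : bool :=
  if s is x :: s' then
    (if s' is _ :: z :: _ then x != z else true) && nonbacktracking s'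
  else true.

Lemma uniq_nonbacktracking (T : eqType) (s : seq T) :
  uniq s -> nonbacktracking s.
Proof.
elim: s => [//|x s IH] /= /andP [xNs /IH ->]; rewrite andbT.
by case: s xNs {IH} => [|y [|z s]] //=; rewrite !inE !negb_or => /and3P [].
Qed.

Lemma nonbacktracking_cons2 (T : eqType) (x y : T) (s : seq T) :
  nonbacktracking [:: x, y & s] = (ohead s != Some x) && nonbacktracking (y :: s).
Proof. by case: s => [|z s] //=; rewrite (inj_eq Some_inj) eq_sym. Qed.

Lemma nonbacktracking_join (T : eqType) (x b : T) (s s2 : seq T) :
  nonbacktracking (x :: rcons s b) -> nonbacktracking (b :: s2) ->
  ohead s2 != Some (last x s) -> nonbacktracking (x :: rcons s b ++ s2).
Proof.
elim: s x => [|y s IH] x.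
  by move=> _ nb2 junction; rewrite nonbacktracking_cons2 junction.
rewrite !rcons_cons cat_cons !nonbacktracking_cons2.
have -> : ohead (rcons s b ++ s2) = ohead (rcons s b) by case: (s).
by case/andP=> -> nb1 nb2 junction; apply: IH.
Qed.

Lemma chain_cat (T : Type) (R : T -> T -> Prop) x s1 s2 :
  chain R x (s1 ++ s2) <-> chain R x s1 /\ chain R (last x s1) s2.
Proof.
elim: s1 x => [|y s1 IH] x /=; first by tauto.
by rewrite IH; tauto.
Qed.

Lemma penult_cat (T : Type) (x : T) s s2 : s2 <> [::] ->
  penult x (s ++ s2) = penult (last x s) s2.
Proof. by case: s2 => [//|y t] _; rewrite /penult belast_cat last_cat. Qed.

Lemma penult_rcons (T : Type) (x b : T) s : penult x (rcons s b) = last x s.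
Proof. by rewrite /penult belast_rcons. Qed.

Definition bumper_path k l (M : gridding k l) (r : cell k l)
    (s : seq (cell k l)) : Prop :=
  gpath M r s /\ s <> [::] /\ bumper M (penult r s) (last r s).

Section CellGraph.

Variables (k l : nat) (M : gridding k l).

Lemma adj_neq (p q : cell k l) : adj M p q -> p != q.
Proof. by case=> _ [_ [pq _]]; apply/eqP. Qed.

Lemma last_vertex (r : cell k l) s : gpath M r s -> is_vertex M (last r s).
Proof.
case=> + [+ _]; elim: s r => [|y s IH] r //= _ [ry ch].
by apply: IH ch; case: ry => _ [].
Qed.

Lemma gpath_size (r : cell k l) s : gpath M r s -> size s < #|{: cell k l}|.
Proof.
case=> _ [_ u]; have := max_card (mem (r :: s)).
by rewrite (card_uniqP u).
Qed.

Hypothesis acyclic : forall x s, ~ gcycle M x s.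

(* In an acyclic cell graph every non-backtracking walk is a path: a first
   repetition x ... x would either be an immediate return x v x or close a
   cycle of length at least 3. *)
Lemma nonbacktracking_walk_uniq (x : cell k l) w :
  chain (adj M) x w -> nonbacktracking (x :: w) -> uniq (x :: w).
Proof.
elim: w x => [//|y w IH] x walk nb.
have tail_uniq : uniq (y :: w).
  by apply: IH; [case: walk | case/andP: nb].
rewrite cons_uniq tail_uniq andbT; apply/negP => x_in.
move: x_in walk nb tail_uniq; case/splitPr => w1 w2.
case: w1 => [|v [|v' w1]].
- by case=> /adj_neq; rewrite eqxx.
- by move=> _; rewrite nonbacktracking_cons2 /= eqxx.
- set cyc := [:: v, v' & w1] => walk _ u.
  have [walk1 [back _]] := proj1 (chain_cat _ x cyc (x :: w2)) walk.
  apply: (acyclic (x := x) (s := cyc)); split; [split; [|split]|split] => //.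
  + by case: walk => -[].
  + have sub : subseq (rcons cyc x) (cyc ++ x :: w2).
      by rewrite -cats1 cat_subseq // sub1seq mem_head.
    by rewrite cons_uniq -rcons_uniq (subseq_uniq sub u).
Qed.

Hypothesis no_bumper_ended : forall p1 p2 t, ~ bumper_ended_path M p1 p2 t.

Lemma bumper_path_cat (r : cell k l) s s2 :
  bumper_path M r s -> bumper_path M (last r s) s2 ->
  bumper_path M r (s ++ s2).
Proof.
case/lastP: s => [|s b]; first by case=> _ [].
rewrite last_rcons => -[[vr [walk1 u1]] [_ bump1]] [[vb [walk2 u2]] [ne2 bump2]].
rewrite penult_rcons last_rcons in bump1.
have junction : ohead s2 != Some (last r s).
  apply/eqP; case: s2 walk2 u2 ne2 bump2 => [//|c t] walk2 u2 _ bump2 [c_eq].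
  apply: (no_bumper_ended (p1 := b) (p2 := c) (t := t)).
  by rewrite -c_eq in bump1; split; [split | split].
have walk : chain (adj M) r (rcons s b ++ s2).
  by apply/chain_cat; rewrite last_rcons.
split; [split; [|split] | split] => //.
- apply: nonbacktracking_walk_uniq walk _; rewrite -cat_cons.
  by apply: nonbacktracking_join; rewrite ?uniq_nonbacktracking.
- by case: (s).
- by rewrite penult_cat // last_cat last_rcons.
Qed.

Lemma bumper_paths_bounded (r0 : cell k l) : is_vertex M r0 ->
  ~ (forall r, is_vertex M r -> exists s, bumper_path M r s).
Proof.
move=> vr0 every.
have long n : exists s, bumper_path M r0 s /\ n <= size s.
  elim: n => [|n [s [bs long]]]; first by have [s bs] := every r0 vr0; exists s.
  have [s2 bs2] := every _ (last_vertex (proj1 bs)).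
  exists (s ++ s2); split; first exact: bumper_path_cat.
  have [_ [ne2 _]] := bs2; rewrite size_cat; case: s2 ne2 {bs2} => [//|c t] _ /=.
  by rewrite addnS ltnS (leq_trans long) ?leq_addr.
have [s [[p _] too_long]] := long #|{: cell k l}|.
by have := gpath_size p; rewrite ltnNge too_long.
Qed.

End CellGraph.

(* A tree without bumper-ended paths has a root from which no path ends in a
   bumper. *)
Theorem mainTheorem14 (k l : nat) (M : gridding k l) :
  (forall i j, is_perm_class (M i j)) ->
  is_tree M ->
  (forall p1 p2 t, ~ bumper_ended_path M p1 p2 t) ->
  exists r : cell k l, is_vertex M r /\
    forall (q : cell k l) (s : seq (cell k l)),
      q <> r -> gpath M r s -> last r s = q ->
      ~ bumper M (penult r s) q.
Proof.
move=> _ [[r0 vr0] [_ acyclic]] no_bumper_ended.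
apply: NNPP => no_root.
apply: (bumper_paths_bounded acyclic no_bumper_ended vr0) => r vr.
apply: NNPP => no_path; apply: no_root; exists r; split=> // q s qr p last_q bump.
apply: no_path; exists s; split=> //; split; last by rewrite last_q.
by move=> s0; apply: qr; rewrite -last_q s0.
Qed.
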